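(* Let $l$ be a positive integer, let $G$ be an arbitrary graph and let $H$ be an $l$-degenerate graph. Then $AT(G+_S H)\le 3$ if $l\in\{1,2\}$, and $AT(G+_S H)\le l+1$ if $l\ge 3$.
   Context: A graph is $k$-degenerate if its vertices can be successively deleted so that each deleted vertex has degree at most $k$ at the time of deletion. For an orientation $D$, a subdigraph is Eulerian if every vertex has equal in- and outdegree in it; $D$ is an AT-orientation if the numbers of Eulerian subgraphs with an even and with an odd number of arcs differ; $AT(G)$ is the smallest $k$ such that $G$ has an AT-orientation of maximum outdegree at most $k-1$. $S(G)$ is obtained from $G$ by subdividing each edge once, with vertex set identified with $V(G)\cup E(G)$. $G+_S H$ has vertex set $(V(G)\cup E(G))\times V(H)$, with $(u_1,u_2)\sim(v_1,v_2)$ iff [$u_1=v_1\in V(G)$ and $u_2v_2\in E(H)$] or [$u_2=v_2$ and $u_1v_1\in E(S(G))$]. *)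

From mathcomp Require Import all_boot.
Set Implicit Arguments. Unset Strict Implicit. Unset Printing Implicit Defensive.

Section Graphs.
Variable V : finType.

Definition simple_graph (e : rel V) : bool :=
  [forall x, ~~ e x x] && [forall x, forall y, e x y == e y x].

(* k-degenerate: the vertices can be listed s_0, s_1, ... (each exactly once)
   so that deleting them in this order, s_i has at most k neighbours among
   the not yet deleted vertices s_(i+1), s_(i+2), ... *)
Definition degenerate (e : rel V) (k : nat) : Prop :=
  exists s : seq V, perm_eq s (enum V) /\
    forall (x0 : V) i, i < size s -> count (e (nth x0 s i)) (drop i.+1 s) <= k.

Definition is_orientation (e : rel V) (D : {set V * V}) : bool :=
  [forall x, forall y, ((x, y) \in D) ==> e x y] &&
  [forall x, forall y, e x y ==> (((x, y) \in D) (+) ((y, x) \in D))].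

Definition eulerian_sub (D S : {set V * V}) : bool :=
  (S \subset D) &&
  [forall v, #|[set a in S | a.1 == v]| == #|[set a in S | a.2 == v]|].

Definition n_even_eulerian (D : {set V * V}) : nat :=
  #|[set S : {set V * V} | eulerian_sub D S & ~~ odd #|S|]|.
Definition n_odd_eulerian (D : {set V * V}) : nat :=
  #|[set S : {set V * V} | eulerian_sub D S & odd #|S|]|.

Definition AT_orientation (e : rel V) (D : {set V * V}) : bool :=
  is_orientation e D && (n_even_eulerian D != n_odd_eulerian D).

Definition outdeg (D : {set V * V}) (v : V) : nat := #|[set y | (v, y) \in D]|.

Definition has_AT_orientation_lt (e : rel V) (k : nat) : bool :=
  [exists D : {set V * V}, AT_orientation e D && [forall v, outdeg D v < k]].

(* AT(G): the smallest such k.  Such k always exists (an acyclic orientation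
   works with k = #|V|), so searching in [0, #|V|+1] finds the minimum. *)
Definition AT (e : rel V) : nat :=
  find (has_AT_orientation_lt e) (iota 0 (#|V|.+2)).

Definition is_edge (e : rel V) (A : {set V}) : bool :=
  [exists x, exists y, e x y && (A == [set x; y])].

Definition Edge (e : rel V) : finType := {A : {set V} | is_edge e A}.

(* vertex set of the subdivision S(G): V(G) + E(G) *)
Definition SV (e : rel V) : finType := (V + Edge e)%type.

Definition sadj (e : rel V) : rel (SV e) := fun a b =>
  match a, b with
  | inl x, inr E => x \in val E
  | inr E, inl x => x \in val E
  | _, _ => false
  end.
End Graphs.

Definition sprod (V U : finType) (g : rel V) (h : rel U) : rel (SV g * U) :=
  fun p q =>
    [&& p.1 == q.1, (if p.1 is inl _ then true else false) & h p.2 q.2]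
    || ((p.2 == q.2) && sadj p.1 q.1).
Arguments sprod {V U} g h.
Arguments sadj {V} e.

From mathcomp Require Import all_boot.
Set Implicit Arguments. Unset Strict Implicit. Unset Printing Implicit Defensive.

(* Orient every edge of G +_S H towards the endpoint of larger rank, where a
   vertex (x, u) with x in V(G) has rank 1 + (position of u in a degeneracy
   ordering of H) and every subdivision vertex (E, u) has rank 0.  Ranks
   strictly increase along arcs, so the only Eulerian subdigraph is the empty
   one and the orientation is an AT-orientation.  A vertex (x, u) only points
   to copies (x, w) of the later neighbours w of u, at most l of them, and a
   subdivision vertex (E, u) only points to the two endpoints of E. *)

Lemma AT_le (T : finType) (e : rel T) k :
  has_AT_orientation_lt e k -> AT e <= k.
Proof.
move=> orient_k; rewrite /AT; have [lt_k|le_k] := ltnP k (#|T|.+2).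
  rewrite leqNgt; apply/negP => /(before_find 0).
  by rewrite nth_iota // add0n orient_k.
by apply: leq_trans (find_size _ _) _; rewrite size_iota.
Qed.

Section RankOrientation.
Variables (T : finType) (rk : T -> nat).

Lemma eulerian_sub_rank_increasing (D S : {set T * T}) :
  (forall a, a \in D -> rk a.1 < rk a.2) -> eulerian_sub D S -> S = set0.
Proof.
move=> rkD /andP [SD balanced]; apply/setP => a0; rewrite inE.
apply/negbTE/negP => a0S.
(* an arc of S with maximal head rank has no arc of S leaving its head *)
have [a aS amax] := arg_maxnP (fun a => rk a.2) a0S.
have : 0 < #|[set b in S | b.2 == a.2]|.
  by apply/card_gt0P; exists a; rewrite inE eqxx andbT.
rewrite -(eqP (forallP balanced a.2)) => /card_gt0P [b].
rewrite inE => /andP [bS /eqP b1].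
by have := leq_trans (rkD b (subsetP SD b bS)) (amax b bS); rewrite b1 ltnn.
Qed.

Lemma AT_count_rank_increasing (D : {set T * T}) :
  (forall a, a \in D -> rk a.1 < rk a.2) ->
  n_even_eulerian D != n_odd_eulerian D.
Proof.
move=> rkD; have eulerian0 S : eulerian_sub D S = (S == set0).
  apply/idP/eqP => [|->]; first exact: eulerian_sub_rank_increasing.
  rewrite /eulerian_sub sub0set; apply/forallP => v.
  by rewrite !(eq_card0 (A := [set a in set0 | _])) // => a; rewrite !inE.
have -> : n_even_eulerian D = 1.
  rewrite -(cards1 (set0 : {set T * T})); apply: eq_card => S.
  by rewrite !inE eulerian0; case: eqP => // ->; rewrite cards0.
have -> // : n_odd_eulerian D = 0.
apply: eq_card0 => S.
by rewrite !inE eulerian0; case: eqP => // ->; rewrite cards0.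
Qed.

Variable e : rel T.
Hypothesis e_sym : symmetric e.
Hypothesis rk_edge : forall x y, e x y -> rk x != rk y.

Definition rank_orientation : {set T * T} :=
  [set a | e a.1 a.2 && (rk a.1 < rk a.2)].

Definition forward_deg (v : T) : nat := #|[set y | e v y && (rk v < rk y)]|.

Lemma rank_orientation_increasing a :
  a \in rank_orientation -> rk a.1 < rk a.2.
Proof. by rewrite inE => /andP []. Qed.

Lemma is_orientation_rank : is_orientation e rank_orientation.
Proof.
apply/andP; split; apply/forallP => x; apply/forallP => y; apply/implyP.
  by rewrite inE => /andP [].
move=> exy; rewrite !inE /= exy -e_sym exy /=.
by have := rk_edge exy; case: ltngtP.
Qed.

Lemma outdeg_rank_orientation v : outdeg rank_orientation v = forward_deg v.
Proof. by apply: eq_card => y; rewrite !inE. Qed.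

Lemma AT_le_rank k : (forall v, forward_deg v < k) -> AT e <= k.
Proof.
move=> fwd_k; apply: AT_le; apply/existsP; exists rank_orientation.
rewrite /AT_orientation is_orientation_rank.
rewrite (AT_count_rank_increasing rank_orientation_increasing) /=.
by apply/forallP => v; rewrite outdeg_rank_orientation.
Qed.

End RankOrientation.

Lemma count_index_gt (T : eqType) (a : pred T) (t : seq T) i :
  uniq t -> count (fun w => a w && (i < index w t)) t = count a (drop i.+1 t).
Proof.
elim: t i => [|x t IHt] i //= /andP [xt ut].
rewrite eqxx ltn0 andbF add0n.
rewrite (@eq_in_count _ _ (fun w => a w && (i < (index w t).+1))); last first.
  by move=> w wt /=; case: eqP => // xw; rewrite xw wt in xt.
case: i => [|i]; last by rewrite -IHt.
by rewrite drop0; apply: eq_count => w /=; rewrite andbT.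
Qed.

Section DegeneracyOrdering.
Variables (U : finType) (h : rel U) (l : nat) (s : seq U).
Hypothesis s_enum : perm_eq s (enum U).
Hypothesis s_deg :
  forall (x0 : U) i, i < size s -> count (h (nth x0 s i)) (drop i.+1 s) <= l.

Lemma uniq_degeneracy_ordering : uniq s.
Proof. by rewrite (perm_uniq s_enum) enum_uniq. Qed.

Lemma mem_degeneracy_ordering u : u \in s.
Proof. by rewrite (perm_mem s_enum) mem_enum. Qed.

Lemma later_neighbours_le u :
  #|[set w | h u w && (index u s < index w s)]| <= l.
Proof.
have card_count (P : pred U) : #|[set w | P w]| = count P s.
  rewrite (eq_card (B := P)) => [|w]; last by rewrite inE.
  by rewrite cardE /enum_mem size_filter -enumT (permP s_enum).
rewrite card_count count_index_gt ?uniq_degeneracy_ordering //.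
have := @s_deg u (index u s).
by rewrite nth_index ?index_mem mem_degeneracy_ordering //; apply.
Qed.

End DegeneracyOrdering.

Section SubdivisionProduct.
Variables (V U : finType) (g : rel V) (h : rel U) (s : seq U).
Hypothesis h_irr : irreflexive h.
Hypothesis h_sym : symmetric h.
Hypothesis s_mem : forall u, u \in s.

Definition sprod_rank (p : SV g * U) : nat :=
  if p.1 is inl _ then (index p.2 s).+1 else 0.

Lemma sprod_sym : symmetric (sprod g h).
Proof.
move=> [a u] [b w]; rewrite /sprod /=.
case: a => [x|E]; case: b => [y|F] /=; rewrite ?andbF ?orbF ?(eq_sym w u) //.
by rewrite h_sym; congr (_ && _); apply: eq_sym.
Qed.

Lemma sprod_rank_edge p q : sprod g h p q -> sprod_rank p != sprod_rank q.
Proof.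
case: p q => [[x|E] u] [[y|F] w]; rewrite /sprod /sprod_rank /= ?andbF ?orbF //.
move=> /andP [_ huw]; rewrite eqSS; apply: contraTneq huw => index_uw.
have := nth_index u (s_mem u); rewrite index_uw nth_index // => ->.
by rewrite h_irr.
Qed.

Lemma forward_deg_sprod_vertex (x : V) u :
  forward_deg sprod_rank (sprod g h) (inl x, u) <=
  #|[set w | h u w && (index u s < index w s)]|.
Proof.
rewrite /forward_deg.
apply: leq_trans (leq_imset_card (fun w => (inl x : SV g, w)) _).
apply: subset_leq_card; apply/subsetP => [[b w]].
rewrite !inE /sprod /sprod_rank /=.
case: b => [y|F] /=; rewrite ?andbF ?orbF ?ltn0 ?andbF //.
case/andP => /andP [/eqP [->] huw] lt_uw.
by apply/imsetP; exists w; rewrite // inE huw -ltnS.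
Qed.

Lemma forward_deg_sprod_edge (E : Edge g) u :
  forward_deg sprod_rank (sprod g h) (inr E, u) <= 2.
Proof.
rewrite /forward_deg.
apply: (@leq_trans #|(fun y => (inl y : SV g, u)) @: val E|).
  apply: subset_leq_card; apply/subsetP => [[b w]].
  rewrite !inE /sprod /sprod_rank /=.
  case: b => [y|F] /=; rewrite ?andbF ?orbF ?ltn0 ?andbF //.
  by case/andP => /andP [/eqP <- yE] _; apply/imsetP; exists y.
apply: leq_trans (leq_imset_card _ _) _.
have /existsP [x /existsP [y /andP [_ /eqP ->]]] := valP E.
by rewrite cards2; case: (x != y).
Qed.

End SubdivisionProduct.

Theorem corollary3p1 (V U : finType) (g : rel V) (h : rel U) (l : nat) :
  0 < l -> simple_graph g -> simple_graph h -> degenerate h l ->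
  AT (sprod g h) <= (if l <= 2 then 3 else l.+1).
Proof.
move=> _ _ /andP [/forallP h_irr /forallP h_sym] [s [s_enum s_deg]].
have {}h_irr : irreflexive h by move=> u; apply/negbTE.
have {}h_sym : symmetric h by move=> u w; apply/eqP/(forallP (h_sym u)).
have s_mem := mem_degeneracy_ordering s_enum.
apply: AT_le_rank (sprod_sym h_sym) (sprod_rank_edge h_irr s_mem) _ _.
case=> [[x|E] u].
  apply: leq_ltn_trans (forward_deg_sprod_vertex g h s x u) _.
  apply: leq_ltn_trans (later_neighbours_le s_enum s_deg u) _.
  by case: (leqP l 2).
apply: leq_ltn_trans (forward_deg_sprod_edge h s E u) _.
by case: (leqP l 2) => // /ltnW.
Qed.
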